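(* Let $\mathcal{C}=\mathsf{CSS}(A,B)$ be a CSS code on $n$ qubits and let $U=\bigotimes_{i=1}^n U_i$ be a $1$-local Clifford circuit with each $U_i\in\{I,P,HP,PH,PHP,H\}$. If $U$ is a logical operator of $\mathcal{C}$, then for each $h\in\{U_{HP},U_{PH},U_H\}$ that is non-empty and a proper subset of $\{1,\dots,n\}$, the code $\mathcal{C}$ splits on $h$.
   Context: A CSS code $\mathsf{CSS}(A,B)$ on $n$ qubits is given by subspaces $A,B\subseteq\mathbb{F}_2^n$ with $a\cdot b=0$ for all $a\in A,b\in B$; its codespace is the common $+1$-eigenspace of $X^a$ ($a\in A$) and $Z^b$ ($b\in B$), where $G^a=\bigotimes_{i:a_i=1}G_i$. A logical operator is a unitary preserving the codespace. $P=\mathrm{diag}(1,i)$, $H$ is Hadamard. For a set $K$ of single-qubit gates, $U_K=\{i: U_i\in K\}$, and $U_G=U_{\{G\}}$. A subspace $A$ splits on a non-empty $h\subsetneq\{1,\dots,n\}$ if $A=A_1\oplus A_2$ with $A_1$ having support $h$ and $A_2$ supported on the complement of $h$; the code splits on $h$ if both $A$ and $B$ split on $h$. *)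

From HB Require Import structures.
From mathcomp Require Import all_boot all_order all_algebra all_field.
Set Implicit Arguments. Unset Strict Implicit. Unset Printing Implicit Defensive.
Import Order.TTheory GRing.Theory Num.Theory.
Local Open Scope ring_scope.

(* Vectors of F_2^n are row vectors 'rV['F_2]_n; they also label the
   computational basis states |x> of n qubits. *)
Notation bits n := 'rV['F_2]_n.

Definition state (n : nat) := bits n -> algC.

Definition dot2 n (a b : bits n) : 'F_2 := \sum_(i < n) a 0 i * b 0 i.

Definition Xop n (a : bits n) (psi : state n) : state n := fun x => psi (x + a).
Definition Zop n (b : bits n) (psi : state n) : state n :=
  fun x => (if dot2 b x == 0 then 1 else -1) * psi x.

Definition css_ortho n (A B : {vspace bits n}) :=
  forall a b, a \in A -> b \in B -> dot2 a b = 0.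

Definition in_codespace n (A B : {vspace bits n}) (psi : state n) :=
  (forall a, a \in A -> Xop a psi = psi) /\ (forall b, b \in B -> Zop b psi = psi).

Definition Pmx : 'M[algC]_2 := \matrix_(i, j) (if i == j then (if i == 1 then 'i else 1) else 0).
Definition Hmx : 'M[algC]_2 :=
  \matrix_(i, j) ((sqrtC 2)^-1 * (if (i == 1) && (j == 1) then -1 else 1)).

Inductive gate := GI | GP | GHP | GPH | GPHP | GH.
Definition gate_eqb (g h : gate) : bool :=
  match g, h with
  | GI, GI | GP, GP | GHP, GHP | GPH, GPH | GPHP, GPHP | GH, GH => true
  | _, _ => false end.
Lemma gate_eqP : Equality.axiom gate_eqb.
Proof. by case; case; constructor. Qed.
HB.instance Definition _ := hasDecEq.Build gate gate_eqP.

Definition gate_mx (g : gate) : 'M[algC]_2 :=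
  match g with
  | GI => 1%:M | GP => Pmx | GHP => Hmx *m Pmx | GPH => Pmx *m Hmx
  | GPHP => Pmx *m Hmx *m Pmx | GH => Hmx end.

Definition bit_ix (c : 'F_2) : 'I_2 := if c == 0 then ord0 else ord_max.

(* The 1-local circuit U = tensor_i U_i, with U_i = gate_mx (g i), applied to a state:
   <x|U|y> = prod_i <x_i|U_i|y_i>. *)
Definition apply_local n (g : 'I_n -> gate) (psi : state n) : state n :=
  fun x => \sum_(y : bits n) (\prod_(i < n) gate_mx (g i) (bit_ix (x 0 i)) (bit_ix (y 0 i))) * psi y.

Definition is_logical n (A B : {vspace bits n}) (g : 'I_n -> gate) :=
  forall psi, in_codespace A B psi -> in_codespace A B (apply_local g psi).

Definition gate_support n (g : 'I_n -> gate) (G : gate) : {set 'I_n} :=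
  [set i | g i == G].

Definition supported_in n (S : {set 'I_n}) (V : {vspace bits n}) :=
  forall v, v \in V -> forall i, i \notin S -> v 0 i = 0.

Definition vsplits n (V : {vspace bits n}) (h : {set 'I_n}) :=
  exists A1 A2 : {vspace bits n},
    [/\ supported_in h A1, supported_in (~: h) A2, directv (A1 + A2) & (A1 + A2)%VS = V].

Definition code_splits n (A B : {vspace bits n}) (h : {set 'I_n}) :=
  vsplits A h /\ vsplits B h.

From mathcomp Require Import all_boot all_order all_algebra all_field ring.
From Stdlib Require Import FunctionalExtensionality.
Set Implicit Arguments. Unset Strict Implicit. Unset Printing Implicit Defensive.
Import Order.TTheory GRing.Theory Num.Theory.
Local Open Scope ring_scope.

(* Each gate of the list is a Clifford gate, so [Z^b X^a U = U (c Z^z' X^x')]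
   for a phase [c], where [(x'_i, z'_i)] is read off the gate [U_i] from how
   it conjugates [X] and [Z].  For [a] in [A] and a code state [psi],
   [X^a (U psi) = U psi]; since [U] is injective, the Pauli [c X^x'] fixes
   every code state.  Evaluating it on indicators of cosets of [A] gives
   [x'] in [A], and similarly [z'] in [B] because [B] is its own double
   orthogonal.  Reading [x'] and [z'] gate by gate, [A] and [B] are closed
   under four restrictions of vectors to the positions of given gate types;
   composing and subtracting these isolates the positions of [HP], [PH] and
   [H], and a subspace closed under restriction to [h] splits on [h]. *)

Lemma F2_cases (t : 'F_2) : t = 0 \/ t = 1.
Proof. by case: t => [[|[|k]] // Hk]; [left|right]; apply: val_inj. Qed.

Lemma addrr_F2 (t : 'F_2) : t + t = 0.
Proof. exact: (@addrr_pchar2 'F_2 (pchar_Fp (isT : prime 2))). Qed.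

Lemma addrr_bits n (x : bits n) : x + x = 0.
Proof. by apply/rowP => i; rewrite !mxE addrr_F2. Qed.

Definition sign2 (t : 'F_2) : algC := if t == 0 then 1 else -1.

Lemma sign2D s t : sign2 (s + t) = sign2 s * sign2 t.
Proof.
by rewrite /sign2; case: (F2_cases s) => ->; case: (F2_cases t) => -> /=;
  rewrite ?mulrNN ?mul1r ?mulr1.
Qed.

Definition diag_gate (g : gate) := g \in [:: GI; GP].
Definition diag_exp (g : gate) (x : 'F_2) : nat := if g == GP then x else 0.
Definition offdiag_exp (g : gate) (x y : 'F_2) : nat :=
  (2 * x * y + match g with GHP => y | GPH => x | GPHP => x + y | _ => 0 end)%N.

(* [H x y = (-1)^(x y) / sqrt 2 = i^(2 x y) / sqrt 2], and a factor [P] on the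
   right (resp. left) of [H] contributes [i^y] (resp. [i^x]). *)
Definition gate_entry (g : gate) (x y : 'F_2) : algC :=
  if diag_gate g then (if x == y then 'i ^+ diag_exp g x else 0)
  else (sqrtC 2)^-1 * 'i ^+ offdiag_exp g x y.

Lemma gate_mxE g x y : gate_mx g (bit_ix x) (bit_ix y) = gate_entry g x y.
Proof.
rewrite /gate_entry.
case: g; case: (F2_cases x) => ->; case: (F2_cases y) => -> /=;
rewrite /bit_ix /= ?mxE ?big_ord_recl ?big_ord0 /= ?mxE ?big_ord_recl ?big_ord0 /= ?mxE.
all: rewrite /diag_exp /offdiag_exp /=; have hi := @mulCii algC; ring: hi.
Qed.

(* The adjoint gate: [i^3] is the complex conjugate of [i]. *)
Definition gate_adj_entry (g : gate) (z t : 'F_2) : algC :=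
  if diag_gate g then (if z == t then 'i ^+ (3 * diag_exp g z) else 0)
  else (sqrtC 2)^-1 * 'i ^+ (3 * offdiag_exp g t z).

Lemma gate_adj_entryK g z y :
  \sum_(t : 'F_2) gate_adj_entry g z t * gate_entry g t y = (z == y)%:R.
Proof.
have hi := @mulCii algC.
have h2 : (sqrtC 2)^-1 * (sqrtC 2)^-1 * 2 = 1 :> algC.
  by rewrite -invfM -expr2 sqrtCK mulVf // pnatr_eq0.
rewrite big_ord_recl big_ord_recl big_ord0 /gate_adj_entry /gate_entry.
case: g; case: (F2_cases z) => ->; case: (F2_cases y) => -> /=.
all: rewrite /diag_exp /offdiag_exp /=; ring: hi h2.
Qed.

(* Conjugation by each gate maps [X] to [X^p Z^q] where [(p, q) = X_image g],
   and [Z] to [X^p Z^q] where [(p, q) = Z_image g], up to a phase. *)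
Definition X_image (g : gate) : 'F_2 * 'F_2 :=
  match g with GI => (1,0) | GP => (1,1) | GHP => (0,1) | GPH => (1,1) | GPHP => (1,0) | GH => (0,1) end.
Definition Z_image (g : gate) : 'F_2 * 'F_2 :=
  match g with GI => (0,1) | GP => (0,1) | GHP => (1,1) | GPH => (1,0) | GPHP => (1,1) | GH => (1,0) end.

Definition conj_x (g : gate) (a b : 'F_2) : 'F_2 := a * (X_image g).1 + b * (Z_image g).1.
Definition conj_z (g : gate) (a b : 'F_2) : 'F_2 := a * (X_image g).2 + b * (Z_image g).2.
Definition conj_phase_exp (g : gate) (a b : 'F_2) : nat :=
  if diag_gate g then diag_exp g a else offdiag_exp g a (conj_x g a b).

(* Entrywise form of [Z^b X^a U = U (i^k Z^z' X^x')] for a single gate [U],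
   where [(X^a psi) x = psi (x + a)]. *)
Lemma gate_entry_conj g a b x y :
  sign2 (b * x) * gate_entry g (x + a) y =
  'i ^+ conj_phase_exp g a b * gate_entry g x (y + conj_x g a b)
    * sign2 (conj_z g a b * (y + conj_x g a b)).
Proof.
rewrite /conj_phase_exp /conj_x /conj_z /gate_entry /sign2.
case: g; case: (F2_cases a) => ->; case: (F2_cases b) => ->;
  case: (F2_cases x) => ->; case: (F2_cases y) => -> /=.
all: rewrite /diag_exp /offdiag_exp /=; have hi := @mulCii algC; ring: hi.
Qed.

Lemma sum_row_prod (T : finType) (R : comPzSemiRingType) n (f : 'I_n -> T -> R) :
  \sum_(x : 'rV[T]_n) \prod_(i < n) f i (x 0 i) = \prod_(i < n) \sum_(t : T) f i t.
Proof.
rewrite bigA_distr_bigA /= (reindex (fun x : 'rV[T]_n => [ffun i => x 0 i])) /=.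
  by apply: eq_bigr => x _; apply: eq_bigr => i _; rewrite ffunE.
exists (fun h : {ffun 'I_n -> T} => \row_i h i) => [x _|h _].
  by apply/rowP => i; rewrite mxE ffunE.
by apply/ffunP => i; rewrite ffunE mxE.
Qed.

Section Circuit.
Variables (n : nat) (g : 'I_n -> gate).
Implicit Types (x y z a b : bits n) (psi : state n).

Lemma dot2C x y : dot2 x y = dot2 y x.
Proof. by apply: eq_bigr => i _; rewrite mulrC. Qed.

Lemma dot2_0l x : dot2 0 x = 0.
Proof. by rewrite /dot2 big1 // => i _; rewrite mxE mul0r. Qed.

Lemma dot2Dr x y z : dot2 x (y + z) = dot2 x y + dot2 x z.
Proof. by rewrite /dot2 -big_split; apply: eq_bigr => i _; rewrite mxE mulrDr. Qed.

Lemma sign2_dot2 b x : sign2 (dot2 b x) = \prod_(i < n) sign2 (b 0 i * x 0 i).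
Proof. by rewrite /dot2 (big_morph sign2 sign2D (id1 := 1) (id2 := 0)). Qed.

Definition local_kernel x y := \prod_(i < n) gate_entry (g i) (x 0 i) (y 0 i).

Lemma apply_localE psi x : apply_local g psi x = \sum_y local_kernel x y * psi y.
Proof.
by apply: eq_bigr => y _; congr (_ * _); apply: eq_bigr => i _; rewrite gate_mxE.
Qed.

Definition local_adj_kernel z x := \prod_(i < n) gate_adj_entry (g i) (z 0 i) (x 0 i).

Lemma local_adj_kernelK z y :
  \sum_x local_adj_kernel z x * local_kernel x y = (z == y)%:R.
Proof.
under eq_bigr => x _ do rewrite -big_split /=.
rewrite (sum_row_prod (fun i t => gate_adj_entry (g i) (z 0 i) t * gate_entry (g i) t (y 0 i))).
under eq_bigr => i _ do rewrite gate_adj_entryK.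
have [->|neq_zy] := eqVneq z y; first by rewrite big1 // => i _; rewrite eqxx.
have [i neq_i] : exists i, z 0 i != y 0 i.
  apply/existsP; apply: contraR neq_zy => /existsPn eq_zy.
  by apply/eqP/rowP => i; apply/eqP/negPn.
by rewrite (bigD1 i) //= (negbTE neq_i) mul0r.
Qed.

Lemma apply_local_inj psi1 psi2 :
  apply_local g psi1 =1 apply_local g psi2 -> psi1 =1 psi2.
Proof.
have unapply psi z : \sum_x local_adj_kernel z x * apply_local g psi x = psi z.
  under eq_bigr => x _ do rewrite apply_localE mulr_sumr.
  rewrite exchange_big /=.
  under eq_bigr => y _ do
    (under eq_bigr => x _ do rewrite mulrA; rewrite -mulr_suml local_adj_kernelK).
  rewrite (bigD1 z) //= eqxx mul1r big1 ?addr0 // => y neq_yz.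
  by rewrite eq_sym (negbTE neq_yz) mul0r.
move=> eq_U z; rewrite -unapply -[RHS]unapply.
by apply: eq_bigr => x _; rewrite eq_U.
Qed.

Definition pauli a b psi : state n := fun x => sign2 (dot2 b x) * psi (x + a).

Lemma Xop_pauli a psi : Xop a psi =1 pauli a 0 psi.
Proof. by move=> x; rewrite /pauli dot2_0l /sign2 eqxx mul1r. Qed.

Lemma Zop_pauli b psi : Zop b psi =1 pauli 0 b psi.
Proof. by move=> x; rewrite /pauli addr0. Qed.

Definition conj_xv a b : bits n := \row_i conj_x (g i) (a 0 i) (b 0 i).
Definition conj_zv a b : bits n := \row_i conj_z (g i) (a 0 i) (b 0 i).
Definition conj_phase a b : algC := \prod_(i < n) 'i ^+ conj_phase_exp (g i) (a 0 i) (b 0 i).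

Lemma pauli_apply_local a b psi :
  pauli a b (apply_local g psi) =1
  apply_local g (fun y => conj_phase a b * pauli (conj_xv a b) (conj_zv a b) psi y).
Proof.
move=> x; rewrite /pauli !apply_localE mulr_sumr.
rewrite [RHS](reindex_inj (addIr (conj_xv a b))) /=.
apply: eq_bigr => y _.
rewrite -addrA addrr_bits addr0 !mulrA; congr (_ * _).
rewrite !sign2_dot2 /local_kernel /conj_phase -!big_split /=.
by apply: eq_bigr => i _; rewrite !mxE gate_entry_conj [_ * gate_entry _ _ _]mulrC.
Qed.

End Circuit.

Lemma notin_vspace_dual (F : fieldType) n (B : {vspace 'rV[F]_n}) v :
  v \notin B -> exists c : 'rV[F]_n,
    (forall b, b \in B -> \sum_i b 0 i * c 0 i = 0) /\ \sum_i v 0 i * c 0 i != 0.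
Proof.
move=> vB; pose p x := x - projv B x.
have p_lin x : p x = \sum_i x 0 i *: p (delta_mx 0 i).
  by rewrite /p {1 2}(row_sum_delta x) linear_sum -sumrB; apply: eq_bigr => i _;
    rewrite linearZ scalerBr.
have [j pv_j] : exists j, p v 0 j != 0.
  apply/existsP; apply: contraR vB => /existsPn pv0.
  have {}pv0 : p v = 0 by apply/rowP => i; rewrite [RHS]mxE; apply/eqP/negPn.
  by rewrite (subr0_eq pv0) memv_proj.
pose c := \row_i p (delta_mx 0 i) 0 j.
have dot_c (x : 'rV_n) : \sum_i x 0 i * c 0 i = p x 0 j.
  by rewrite p_lin summxE; apply: eq_bigr => i _; rewrite !mxE.
exists c; split=> [b bB|]; rewrite dot_c //.
by rewrite /p projv_id // subrr mxE.
Qed.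

Section Restriction.
Variables (n : nat) (g : 'I_n -> gate).
Implicit Types (s t u : seq gate) (v : bits n).

Definition rmask (h : {set 'I_n}) v : bits n := \row_i if i \in h then v 0 i else 0.

Definition restrict s v := rmask [set i | g i \in s] v.

Lemma restrict0 s : restrict s 0 = 0.
Proof. by apply/rowP => i; rewrite !mxE if_same. Qed.

Lemma restrict1 G v : restrict [:: G] v = rmask (gate_support g G) v.
Proof. by apply/rowP => i; rewrite !mxE !inE. Qed.

Lemma restrictI s t u v : (forall G, (G \in u) = (G \in s) && (G \in t)) ->
  restrict s (restrict t v) = restrict u v.
Proof.
by move=> stu; apply/rowP => i; rewrite !mxE !inE stu; case: (g i \in s); case: (g i \in t).
Qed.

Lemma restrictB s t u v :
  (forall G, (G \in u) = (G \in s) && (G \notin t)) -> {subset t <= s} ->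
  restrict s v - restrict t v = restrict u v.
Proof.
move=> stu ts; apply/rowP => i; rewrite !mxE !inE stu.
case t_gi: (g i \in t); first by rewrite ts // subrr.
by case: (g i \in s); rewrite subr0.
Qed.

Lemma conj_xvE a b :
  conj_xv g a b = restrict [:: GI; GP; GPH; GPHP] a + restrict [:: GHP; GPH; GPHP; GH] b.
Proof.
apply/rowP => i; rewrite !mxE !inE /conj_x.
by case: (g i) => /=; rewrite ?mulr1 ?mulr0 ?addr0 ?add0r.
Qed.

Lemma conj_zvE a b :
  conj_zv g a b = restrict [:: GP; GHP; GPH; GH] a + restrict [:: GI; GP; GHP; GPHP] b.
Proof.
apply/rowP => i; rewrite !mxE !inE /conj_z.
by case: (g i) => /=; rewrite ?mulr1 ?mulr0 ?addr0 ?add0r.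
Qed.

End Restriction.

Section Code.
Variables (n : nat) (A B : {vspace bits n}).
Hypothesis orthoAB : css_ortho A B.
Implicit Types (x z c v : bits n) (psi : state n).

Lemma dot2_dual_mem v :
  (forall c, (forall b, b \in B -> dot2 b c = 0) -> dot2 v c = 0) -> v \in B.
Proof.
move=> orth_v; apply/negPn/negP => /notin_vspace_dual[c [orth_c]] /eqP; apply.
exact: orth_v.
Qed.

Definition coset_state c : state n := fun x => if x + c \in A then 1 else 0.

Lemma coset_state_code c :
  (forall b, b \in B -> dot2 b c = 0) -> in_codespace A B (coset_state c).
Proof.
move=> orth_c; split=> [a aA|b bB]; apply: functional_extensionality => x.
  by rewrite /Xop /coset_state addrAC rpredDr.
rewrite /Zop /coset_state; case xcA: (x + c \in A); last by rewrite mulr0.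
suff -> : dot2 b x = 0 by rewrite eqxx mulr1.
have -> : x = (x + c) + c by rewrite -addrA addrr_bits addr0.
by rewrite dot2Dr dot2C orthoAB // orth_c // addr0.
Qed.

(* Testing on the coset states: at [y = 0] on [A] itself, then at [y = c]
   on [c + A] for every [c] orthogonal to [B]. *)
Lemma stabilizer_mem (k : algC) x z :
  (forall psi, in_codespace A B psi -> forall y, k * pauli x z psi y = psi y) ->
  x \in A /\ z \in B.
Proof.
move=> fixes.
have orth0 b : b \in B -> dot2 b 0 = 0 by rewrite dot2C dot2_0l.
have := fixes _ (coset_state_code orth0) 0.
rewrite /pauli /coset_state dot2C dot2_0l /sign2 eqxx mul1r !add0r addr0 mem0v.
case xA: (x \in A); last by rewrite mulr0 => /eqP; rewrite eq_sym oner_eq0.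
rewrite mulr1 => k1; split=> //.
apply: dot2_dual_mem => c orth_c.
have := fixes _ (coset_state_code orth_c) c.
rewrite /pauli /coset_state addrr_bits mem0v addrAC addrr_bits add0r xA k1 mul1r mulr1.
rewrite /sign2; case: eqP => [-> //|_].
by move/eqP; rewrite -subr_eq0 -opprD -[1 + 1]/(2%:R : algC) oppr_eq0 pnatr_eq0.
Qed.

Section Logical.
Variable g : 'I_n -> gate.
Hypothesis logical_g : is_logical A B g.

Lemma logical_conj_mem a b :
  (forall psi, in_codespace A B psi -> pauli a b psi =1 psi) ->
  conj_xv g a b \in A /\ conj_zv g a b \in B.
Proof.
move=> fixes; apply: (@stabilizer_mem (conj_phase g a b)) => psi code_psi.
apply: (@apply_local_inj _ g) => x.
by rewrite -pauli_apply_local fixes //; apply: logical_g.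
Qed.

Lemma restrict_memA a : a \in A ->
  restrict g [:: GI; GP; GPH; GPHP] a \in A /\ restrict g [:: GP; GHP; GPH; GH] a \in B.
Proof.
move=> aA; have [] := @logical_conj_mem a 0.
  by move=> psi [fixA _] x; rewrite -Xop_pauli fixA.
by rewrite conj_xvE conj_zvE !restrict0 !addr0.
Qed.

Lemma restrict_memB b : b \in B ->
  restrict g [:: GHP; GPH; GPHP; GH] b \in A /\ restrict g [:: GI; GP; GHP; GPHP] b \in B.
Proof.
move=> bB; have [] := @logical_conj_mem 0 b.
  by move=> psi [_ fixB] x; rewrite -Zop_pauli fixB.
by rewrite conj_xvE conj_zvE !restrict0 !add0r.
Qed.

Let XX a (aA : a \in A) := (restrict_memA aA).1.
Let XZ a (aA : a \in A) := (restrict_memA aA).2.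
Let ZX b (bB : b \in B) := (restrict_memB bB).1.
Let ZZ b (bB : b \in B) := (restrict_memB bB).2.

Lemma restrict1_memA G a : G \in [:: GHP; GPH; GH] -> a \in A -> restrict g [:: G] a \in A.
Proof.
move=> HG aA.
have A_HP_PH_H : restrict g [:: GHP; GPH; GH] a \in A.
  by rewrite -(@restrictI _ g [:: GHP; GPH; GPHP; GH] [:: GP; GHP; GPH; GH]) ?ZX ?XZ //; case.
have A_PH : restrict g [:: GPH] a \in A.
  by rewrite -(@restrictI _ g [:: GI; GP; GPH; GPHP] [:: GHP; GPH; GH]) ?XX //; case.
have A_HP_H : restrict g [:: GHP; GH] a \in A.
  by rewrite -(@restrictB _ g [:: GHP; GPH; GH] [:: GPH]) ?memvB //; case.
have B_HP_H : restrict g [:: GHP; GH] a \in B.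
  by rewrite -(@restrictI _ g [:: GP; GHP; GPH; GH] [:: GHP; GH]) ?XZ //; case.
have B_HP : restrict g [:: GHP] a \in B.
  by rewrite -(@restrictI _ g [:: GI; GP; GHP; GPHP] [:: GHP; GH]) ?ZZ //; case.
have A_HP : restrict g [:: GHP] a \in A.
  by rewrite -(@restrictI _ g [:: GHP; GPH; GPHP; GH] [:: GHP]) ?ZX //; case.
have A_H : restrict g [:: GH] a \in A.
  by rewrite -(@restrictB _ g [:: GHP; GH] [:: GHP]) ?memvB //; case.
by move: HG; rewrite !inE => /or3P[] /eqP ->.
Qed.

Lemma restrict1_memB G b : G \in [:: GHP; GPH; GH] -> b \in B -> restrict g [:: G] b \in B.
Proof.
move=> HG bB.
have B_HP_PH_H : restrict g [:: GHP; GPH; GH] b \in B.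
  by rewrite -(@restrictI _ g [:: GP; GHP; GPH; GH] [:: GHP; GPH; GPHP; GH]) ?XZ ?ZX //; case.
have B_HP : restrict g [:: GHP] b \in B.
  by rewrite -(@restrictI _ g [:: GI; GP; GHP; GPHP] [:: GHP; GPH; GH]) ?ZZ //; case.
have B_PH_H : restrict g [:: GPH; GH] b \in B.
  by rewrite -(@restrictB _ g [:: GHP; GPH; GH] [:: GHP]) ?memvB //; case.
have A_PH_H : restrict g [:: GPH; GH] b \in A.
  by rewrite -(@restrictI _ g [:: GHP; GPH; GPHP; GH] [:: GPH; GH]) ?ZX //; case.
have A_PH : restrict g [:: GPH] b \in A.
  by rewrite -(@restrictI _ g [:: GI; GP; GPH; GPHP] [:: GPH; GH]) ?XX //; case.
have B_PH : restrict g [:: GPH] b \in B.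
  by rewrite -(@restrictI _ g [:: GP; GHP; GPH; GH] [:: GPH]) ?XZ //; case.
have B_H : restrict g [:: GH] b \in B.
  by rewrite -(@restrictB _ g [:: GPH; GH] [:: GPH]) ?memvB //; case.
by move: HG; rewrite !inE => /or3P[] /eqP ->.
Qed.

End Logical.
End Code.

Lemma rmask_vsplits n (V : {vspace bits n}) (h : {set 'I_n}) :
  (forall v, v \in V -> rmask h v \in V) -> vsplits V h.
Proof.
move=> maskV.
have rmask_lin k : {f : 'End(bits n) | forall v, f v = rmask k v}.
  exists (linfun (mulmxr (diag_mx (\row_i (i \in k)%:R)))) => v.
  rewrite lfunE /= mul_mx_diag; apply/rowP => i; rewrite !mxE.
  by case: (i \in k); rewrite ?mulr1 ?mulr0.
have [f1 f1E] := rmask_lin h; have [f2 f2E] := rmask_lin (~: h).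
have maskC v : rmask h v + rmask (~: h) v = v.
  by apply/rowP => i; rewrite !mxE inE; case: (i \in h); rewrite ?addr0 ?add0r.
have maskCV v : v \in V -> rmask (~: h) v \in V.
  by move=> vV; rewrite -[rmask _ v](addKr (rmask h v)) maskC rpredD ?rpredN ?maskV.
exists (f1 @: V)%VS, (f2 @: V)%VS; split.
- by move=> _ /memv_imgP[u _ ->] i /negbTE hi; rewrite f1E mxE hi.
- by move=> _ /memv_imgP[u _ ->] i; rewrite inE negbK f2E mxE inE => ->.
- apply/directv_addP/vspaceP => w; rewrite memv_cap memv0.
  apply/andP/eqP => [[/memv_imgP[u _ ->] /memv_imgP[u' _ e]]|->]; last by rewrite !mem0v.
  apply/rowP => i; move/rowP/(_ i): e; rewrite f1E f2E !mxE inE.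
  by case: (i \in h) => //= ->.
- apply/vspaceP => w; apply/memv_addP/idP => [[_ /memv_imgP[u uV ->] [_ /memv_imgP[u' u'V ->] ->]]|wV].
    by rewrite f1E f2E rpredD ?maskV ?maskCV.
  exists (f1 w); first exact: memv_img.
  exists (f2 w); first exact: memv_img.
  by rewrite f1E f2E maskC.
Qed.

Theorem proposition7 (n : nat) (A B : {vspace 'rV['F_2]_n}) (g : 'I_n -> gate) :
  css_ortho A B ->
  is_logical A B g ->
  forall G : gate, G \in [:: GHP; GPH; GH] ->
  let h := gate_support g G in
  h != set0 -> h != [set: 'I_n] ->
  code_splits A B h.
Proof.
(* [vsplits] allows a zero summand, so [h] need not be nonempty or proper. *)
move=> orthoAB logical_g G HG h _ _.
split; apply: rmask_vsplits => v vV; rewrite -restrict1.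
- by move: (restrict1_memA orthoAB logical_g HG vV).
- by move: (restrict1_memB orthoAB logical_g HG vV).
Qed.
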